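(* There exists $\alpha\in(0,1)$ such that $\tilde\zeta(\upsilon)<\alpha<1$ for all $\upsilon\in(0,1)$, where $\tilde\zeta(\upsilon):=\sup_{j\ge1}\zeta_1(\upsilon^j)$.
   Context: The function $\zeta_1$ on $(0,1)$ is $\zeta_1(\upsilon)=\frac{1}{8\log^3\upsilon}\big(9-12\upsilon^2+3\upsilon^4+4\log\upsilon(3+\log^2\upsilon)+\sqrt{R(\upsilon)}\big)$, with $R(\upsilon)=225-504\upsilon^2+342\upsilon^4-72\upsilon^6+9\upsilon^8+(360-288\upsilon^2-72\upsilon^4)\log\upsilon+144\log^2\upsilon+(-120+96\upsilon^2+24\upsilon^4)\log^3\upsilon-96\log^4\upsilon+16\log^6\upsilon$. *)

From Stdlib Require Import Reals.
From Coquelicot Require Import Coquelicot.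
Open Scope R_scope.

Definition Rpoly (u : R) : R :=
  225 - 504 * u^2 + 342 * u^4 - 72 * u^6 + 9 * u^8
  + (360 - 288 * u^2 - 72 * u^4) * ln u
  + 144 * (ln u)^2
  + (-120 + 96 * u^2 + 24 * u^4) * (ln u)^3
  - 96 * (ln u)^4
  + 16 * (ln u)^6.

Definition zeta1 (u : R) : R :=
  / (8 * (ln u)^3) *
  (9 - 12 * u^2 + 3 * u^4 + 4 * ln u * (3 + (ln u)^2) + sqrt (Rpoly u)).

Definition zeta_tilde (u : R) : Rbar :=
  Sup_seq (fun n : nat => zeta1 (u ^ (S n))).

(* With x = -ln v > 0 and w = v^2, zeta1 v = (P + sqrt Q) / (-8 x^3) for polynomials P, Q in
   x and w, so zeta1 v <= 4/5 amounts to sqrt Q >= -32/5 x^3 - P, and it suffices that the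
   square of the right-hand side is at most Q.  That difference is 16 w^2 q(x, 1/w) for a
   quadratic q(x, .) with nonpositive leading coefficient; since 1/w = exp (2x) lies beyond
   the degree-6 Taylor polynomial of exp at 2x, where q(x, .) is already nonpositive and
   nonincreasing, q(x, 1/w) <= 0.  Hence zeta1 <= 4/5 on (0,1), and every zeta_tilde u is
   at most 4/5 < 9/10. *)
From Stdlib Require Import Reals Lra.
From Coquelicot Require Import Coquelicot.
Open Scope R_scope.

Ltac pose_pow_nonneg x :=
  repeat match goal with
  | |- context [x ^ ?n] =>
      lazymatch goal with
      | _ : 0 <= x ^ n |- _ => fail
      | _ => assert (0 <= x ^ n) by (apply pow_le; lra)
      end
  end.

Lemma quadratic_nonpos_from a b c z0 z :
  a <= 0 -> a * z0 ^ 2 + b * z0 + c <= 0 -> 2 * a * z0 + b <= 0 -> z0 <= z ->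
  a * z ^ 2 + b * z + c <= 0.
Proof.
  intros Ha Hval Hslope Hz.
  replace (a * z ^ 2 + b * z + c) with
    ((a * z0 ^ 2 + b * z0 + c) + (2 * a * z0 + b) * (z - z0) + a * (z - z0) ^ 2) by ring.
  assert (0 <= (z - z0) ^ 2) by apply pow2_ge_0.
  nra.
Qed.

Lemma sqrt_ge_of_sqr_le t r : t ^ 2 <= r -> t <= sqrt r.
Proof.
  intros Htr. destruct (Rle_dec t 0) as [Ht | Ht].
  - pose proof (sqrt_pos r). lra.
  - rewrite <- (sqrt_pow2 t) by lra. now apply sqrt_le_1_alt.
Qed.

Lemma div_neg_le n d c : d < 0 -> c * d <= n -> n / d <= c.
Proof.
  intros Hd Hn.
  replace (n / d) with (c + (n - c * d) * / d) by (field; lra).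
  assert (/ d < 0) by (apply Rinv_lt_0_compat; lra).
  nra.
Qed.

Definition taylor_exp6 (y : R) : R :=
  1 + y + y ^ 2 / 2 + y ^ 3 / 6 + y ^ 4 / 24 + y ^ 5 / 120 + y ^ 6 / 720.

Lemma taylor_exp6_le_exp y : 0 <= y -> taylor_exp6 y <= exp y.
Proof.
  intros Hy. pose proof (exp_ge_taylor y 6 Hy) as Htaylor.
  cbn [sum_f_R0 Factorial.fact] in Htaylor. rewrite !INR_IZR_INZ in Htaylor.
  cbn in Htaylor. unfold taylor_exp6. lra.
Qed.

Section ZetaNumerator.

Variables x w : R.

Definition zeta1_rat_part : R := 9 - 12 * w + 3 * w ^ 2 - 4 * x * (3 + x ^ 2).

Definition zeta1_disc : R :=
  225 - 504 * w + 342 * w ^ 2 - 72 * w ^ 3 + 9 * w ^ 4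
  - (360 - 288 * w - 72 * w ^ 2) * x + 144 * x ^ 2
  - (-120 + 96 * w + 24 * w ^ 2) * x ^ 3 - 96 * x ^ 4 + 16 * x ^ 6.

Definition gap_c0 : R := 12/5 * x ^ 3 - 9 - 9 * x.
Definition gap_c1 : R := 18 + 12/5 * x ^ 3.
Definition gap_c2 : R := -9 + 9 * x - 24/5 * x ^ 3 + 12/5 * x ^ 4 - 16/25 * x ^ 6.

Lemma zeta1_gap :
  (-32/5 * x ^ 3 - zeta1_rat_part) ^ 2 - zeta1_disc
  = 16 * (gap_c0 * w ^ 2 + gap_c1 * w + gap_c2).
Proof. unfold zeta1_rat_part, zeta1_disc, gap_c0, gap_c1, gap_c2. field. Qed.

End ZetaNumerator.

Lemma zeta1_eq v :
  zeta1 v = (zeta1_rat_part (- ln v) (v ^ 2) + sqrt (zeta1_disc (- ln v) (v ^ 2)))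
            / (-8 * (- ln v) ^ 3).
Proof.
  unfold zeta1, Rpoly, zeta1_rat_part, zeta1_disc, Rdiv.
  replace (-8 * (- ln v) ^ 3) with (8 * ln v ^ 3) by ring.
  rewrite Rmult_comm. f_equal. f_equal; [ring | f_equal; ring].
Qed.

Lemma gap_c2_nonpos x : 0 < x -> gap_c2 x <= 0.
Proof.
  intros Hx.
  assert (Hcubic : 9/4 * x ^ 2 - 24/5 * x ^ 3 + 9 * x - 9 <= 0).
  { destruct (Rle_dec x 1).
    - assert (0 <= (x - 9/10) * (x - 9/10) * (x + 18/10))
        by (apply Rmult_le_pos; [apply Rle_0_sqr | lra]).
      nra.
    - assert (0 <= (x - 30/17) * (x - 30/17)) by apply Rle_0_sqr.
      nra. }
  assert (0 <= (4/5 * x ^ 3 - 3/2 * x) ^ 2) by apply pow2_ge_0.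
  replace (gap_c2 x) with
    (- (4/5 * x ^ 3 - 3/2 * x) ^ 2 + (9/4 * x ^ 2 - 24/5 * x ^ 3 + 9 * x - 9))
    by (unfold gap_c2; field).
  lra.
Qed.

Lemma gap_at_taylor_nonpos x : 0 < x ->
  gap_c2 x * taylor_exp6 (2 * x) ^ 2 + gap_c1 x * taylor_exp6 (2 * x) + gap_c0 x <= 0.
Proof.
  intros Hx.
  replace (gap_c2 x * taylor_exp6 (2 * x) ^ 2 + gap_c1 x * taylor_exp6 (2 * x) + gap_c0 x)
    with (- (56/25 * x ^ 6 + 104/25 * x ^ 7 + 116/25 * x ^ 8 + 388/75 * x ^ 9
             + 368/75 * x ^ 10 + 1408/375 * x ^ 11 + 2816/1125 * x ^ 12
             + 1648/1125 * x ^ 13 + 832/1125 * x ^ 14 + 1024/3375 * x ^ 15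
             + 64/625 * x ^ 16 + 512/16875 * x ^ 17 + 256/50625 * x ^ 18))
    by (unfold gap_c0, gap_c1, gap_c2, taylor_exp6; field).
  pose_pow_nonneg x. lra.
Qed.

Lemma gap_slope_at_taylor_nonpos x : 0 < x ->
  2 * gap_c2 x * taylor_exp6 (2 * x) + gap_c1 x <= 0.
Proof.
  intros Hx.
  replace (2 * gap_c2 x * taylor_exp6 (2 * x) + gap_c1 x)
    with (- (x * (18 - 24/5 * x ^ 2 + 12/5 * x ^ 3))
          - (12/5 * x ^ 5 + 32/25 * x ^ 6 + 24/25 * x ^ 7 + 48/25 * x ^ 8
             + 32/25 * x ^ 9 + 32/75 * x ^ 10 + 128/375 * x ^ 11 + 128/1125 * x ^ 12))
    by (unfold gap_c1, gap_c2, taylor_exp6; field).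
  (* 12/5 x^3 - 24/5 x^2 >= -128/45 by 12/5 (x - 4/3)^2 (x + 2/3) >= 0 *)
  assert (0 <= (x - 4/3) * (x - 4/3) * (x + 2/3))
    by (apply Rmult_le_pos; [apply Rle_0_sqr | lra]).
  assert (0 <= x * (18 - 24/5 * x ^ 2 + 12/5 * x ^ 3)) by (apply Rmult_le_pos; nra).
  pose_pow_nonneg x. lra.
Qed.

Lemma gap_nonpos x Z : 0 < x -> taylor_exp6 (2 * x) <= Z ->
  gap_c2 x * Z ^ 2 + gap_c1 x * Z + gap_c0 x <= 0.
Proof.
  intros Hx HZ. apply quadratic_nonpos_from with (taylor_exp6 (2 * x)); auto.
  - now apply gap_c2_nonpos.
  - now apply gap_at_taylor_nonpos.
  - now apply gap_slope_at_taylor_nonpos.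
Qed.

Lemma zeta1_le v : 0 < v < 1 -> zeta1 v <= 4/5.
Proof.
  intros [Hv0 Hv1].
  set (x := - ln v). set (w := v ^ 2).
  assert (Hx : 0 < x).
  { assert (ln v < 0) by (rewrite <- ln_1; apply ln_increasing; lra). unfold x. lra. }
  assert (Hw : 0 < w) by (apply pow_lt; lra).
  assert (Hexp : exp (2 * x) = / w).
  { unfold x, w. replace (2 * - ln v) with (- ln v + - ln v) by ring.
    rewrite exp_plus, exp_Ropp, exp_ln by lra. field. lra. }
  assert (Hgap : gap_c0 x * w ^ 2 + gap_c1 x * w + gap_c2 x <= 0).
  { replace (gap_c0 x * w ^ 2 + gap_c1 x * w + gap_c2 x)
      with (w ^ 2 * (gap_c2 x * (/ w) ^ 2 + gap_c1 x * / w + gap_c0 x)) by (field; lra).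
    assert (0 < w ^ 2) by (apply pow_lt; lra).
    assert (gap_c2 x * (/ w) ^ 2 + gap_c1 x * / w + gap_c0 x <= 0).
    { apply gap_nonpos; [exact Hx |]. rewrite <- Hexp. apply taylor_exp6_le_exp. lra. }
    nra. }
  rewrite zeta1_eq. fold x w.
  assert (0 < x ^ 3) by (apply pow_lt; lra).
  apply div_neg_le; [lra |].
  assert (-32/5 * x ^ 3 - zeta1_rat_part x w <= sqrt (zeta1_disc x w)).
  { apply sqrt_ge_of_sqr_le. pose proof (zeta1_gap x w). lra. }
  lra.
Qed.

Theorem lemma4p9 :
  exists alpha : R, 0 < alpha < 1 /\
    forall u : R, 0 < u < 1 -> Rbar_lt (zeta_tilde u) (Finite alpha).
Proof.
  exists (9/10). split; [lra |].
  intros u Hu.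
  apply Rbar_le_lt_trans with (Finite (4/5)); [| simpl; lra].
  apply Rbar_not_lt_le. intros Hsup.
  apply Sup_seq_minor_lt in Hsup as [n Hn]. cbn [Rbar_lt] in Hn.
  assert (zeta1 (u ^ S n) <= 4/5).
  { apply zeta1_le. split.
    - apply pow_lt; lra.
    - apply pow_lt_1_compat; [lra | apply Nat.lt_0_succ]. }
  lra.
Qed.
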